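(* Let $f\in\mathbb{R}[x,y]$ be a polynomial of degree $n\ge 3$. Then, for $k=1,2$, the set of singular points at infinity of $\mathbb{Y}_k$ is $\{(u,v,0)\in\mathbb{S}^2: f_n(u,v)=0\}$.
   Context: Write $f=\sum_{i=0}^n f_i$ with $f_i$ homogeneous of degree $i$, $F(u,v,\omega)=\sum_{i=0}^n\omega^{n-i}f_i(u,v)$, $A=-uF_{uu}-vF_{uv}$, $B=-uF_{uv}-vF_{vv}$, $S=u^2F_{uu}+2uvF_{uv}+v^2F_{vv}$, and let $Q=\omega^2F_{uu}du^2+2\omega^2F_{uv}du\,dv+\omega^2F_{vv}dv^2+2\omega A\,du\,d\omega+2\omega B\,dv\,d\omega+S\,d\omega^2$ restricted to the unit sphere $\mathbb{S}^2\subset\mathbb{R}^3=\{(u,v,\omega)\}$ (the analytic extension to the Poincaré sphere of the second fundamental form $f_{xx}dx^2+2f_{xy}dxdy+f_{yy}dy^2$). $\mathbb{Y}_1,\mathbb{Y}_2$ are the two fields of lines on $\mathbb{S}^2$ given by $Q_p(\xi,\xi)=0$, $\xi\in T_p\mathbb{S}^2$. A singular point of $\mathbb{Y}_k$ is a point $p$ where the restriction of $Q_p$ to $T_p\mathbb{S}^2$ vanishes identically; a singular point at infinity is one lying on the equator $\{\omega=0\}$. *)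

From HB Require Import structures.
From mathcomp Require Import all_boot all_order all_algebra.
From mathcomp Require Import mpoly.
Set Implicit Arguments. Unset Strict Implicit. Unset Printing Implicit Defensive.
Import Order.TTheory GRing.Theory Num.Theory.
Local Open Scope ring_scope.

(* Variables: for {mpoly R[2]} : x = 'X_0, y = 'X_1.
   For {mpoly R[3]} : u = 'X_0, v = 'X_1, omega = 'X_2. *)
Definition o0 : 'I_3 := @Ordinal 3 0 isT.
Definition o1 : 'I_3 := @Ordinal 3 1 isT.
Definition o2 : 'I_3 := @Ordinal 3 2 isT.

Section Defs.
Variable R : realFieldType.

Definition hcomp (i : nat) (f : {mpoly R[2]}) : {mpoly R[2]} :=
  \sum_(m <- msupp f | mdeg m == i) f@_m *: 'X_[m].

Definition Fhom (n : nat) (f : {mpoly R[2]}) : {mpoly R[3]} :=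
  \sum_(i < n.+1) 'X_o2 ^+ (n - i) *
     (hcomp i f \mPo [tuple ('X_o0 : {mpoly R[3]}); 'X_o1]).

Definition ev3 (P : {mpoly R[3]}) (u v w : R) : R := P.@[fun i : 'I_3 => nth 0 [:: u; v; w] i].

Definition Qform (n : nat) (f : {mpoly R[2]}) (u v w a b c : R) : R :=
  let F := Fhom n f in
  let Fuu := ev3 (mderiv o0 (mderiv o0 F)) u v w in
  let Fuv := ev3 (mderiv o1 (mderiv o0 F)) u v w in
  let Fvv := ev3 (mderiv o1 (mderiv o1 F)) u v w in
  let A := - u * Fuu - v * Fuv in
  let B := - u * Fuv - v * Fvv in
  let S := u ^+ 2 * Fuu + 2 * u * v * Fuv + v ^+ 2 * Fvv in
  w ^+ 2 * Fuu * a ^+ 2 + 2 * w ^+ 2 * Fuv * a * b + w ^+ 2 * Fvv * b ^+ 2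
  + 2 * w * A * a * c + 2 * w * B * b * c + S * c ^+ 2.

Definition on_sphere (u v w : R) : Prop := u ^+ 2 + v ^+ 2 + w ^+ 2 = 1.

(* p = (u,v,w) on S^2 is a singular point of Y_1 (equivalently Y_2):
   Q_p restricted to T_p S^2 vanishes identically. *)
Definition singular_point (n : nat) (f : {mpoly R[2]}) (u v w : R) : Prop :=
  on_sphere u v w /\
  forall a b c : R, u * a + v * b + w * c = 0 -> Qform n f u v w a b c = 0.

Definition ev2 (P : {mpoly R[2]}) (u v : R) : R := P.@[fun i : 'I_2 => nth 0 [:: u; v] i].

End Defs.

From HB Require Import structures.
From mathcomp Require Import all_boot all_order all_algebra.
From mathcomp Require Import mpoly ring.
Import Order.TTheory GRing.Theory Num.Theory.
Local Open Scope ring_scope.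

(* On the equator the tangent plane of S^2 contains (0,0,1), and there Q reduces
   to S d(omega)^2.  By Euler's identity for E = u d/du + v d/dv,
   S = E(E F) - E F.  Since omega^(n-i) f_i(u,v) is an eigenvector of E with
   eigenvalue i, this gives S = sum_i i(i-1) omega^(n-i) f_i, which at omega = 0
   is n(n-1) f_n(u,v).  As n(n-1) != 0, the singular points on the equator are
   exactly the zeros of f_n. *)

Lemma mderivXU (R : nzRingType) (k : nat) (i j : 'I_k) :
  mderiv i ('X_j : {mpoly R[k]}) = (j == i)%:R.
Proof.
rewrite mderivX mnm1E; case: eqP => [->|_]; last by rewrite scale0r.
by rewrite scale1r (_ : U_(i) - U_(i) = 0)%MM ?mpolyX0 //; apply/mnmP => l; rewrite !mnmE subnn.
Qed.

Section EulerOperator.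
Variable R : comNzRingType.
Local Notation P3 := {mpoly R[3]}.

Definition euler (P : P3) : P3 := 'X_o0 * mderiv o0 P + 'X_o1 * mderiv o1 P.

Lemma eulerD (P Q : P3) : euler (P + Q) = euler P + euler Q.
Proof. by rewrite /euler !mderivD; ring. Qed.

Lemma eulerZ (c : R) (P : P3) : euler (c *: P) = c *: euler P.
Proof. by rewrite /euler !mderivZ scalerDr !scalerAr. Qed.

Lemma eulerM (P Q : P3) : euler (P * Q) = euler P * Q + P * euler Q.
Proof. by rewrite /euler !mderivM; ring. Qed.

Lemma euler_sum (I : Type) (r : seq I) (p : pred I) (F : I -> P3) :
  euler (\sum_(i <- r | p i) F i) = \sum_(i <- r | p i) euler (F i).
Proof.
elim/big_rec2: _ => [|i P Q _ <-]; last by rewrite eulerD.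
by rewrite /euler !mderiv0 !mulr0 addr0.
Qed.

Lemma eulerX0 : euler 'X_o0 = 1 *: 'X_o0.
Proof. by rewrite /euler !mderivXU /= scale1r; ring. Qed.

Lemma eulerX1 : euler 'X_o1 = 1 *: 'X_o1.
Proof. by rewrite /euler !mderivXU /= scale1r; ring. Qed.

Lemma eulerX2 : euler 'X_o2 = 0 *: 'X_o2.
Proof. by rewrite /euler !mderivXU /= scale0r; ring. Qed.

Lemma euler_eigenM {a b : R} {P Q : P3} :
  euler P = a *: P -> euler Q = b *: Q -> euler (P * Q) = (a + b) *: (P * Q).
Proof. by move=> EP EQ; rewrite eulerM EP EQ -scalerAl -scalerAr scalerDl. Qed.

Lemma euler_eigenXn {c : R} {P : P3} (k : nat) :
  euler P = c *: P -> euler (P ^+ k) = (k%:R * c) *: P ^+ k.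
Proof.
move=> EP; elim: k => [|k IH].
  by rewrite expr0 mul0r scale0r /euler -mpolyC1 !mderivC; ring.
by rewrite exprS (euler_eigenM EP IH) -[k.+1]addn1 natrD; congr (_ *: _); ring.
Qed.

Lemma hessian_euler (P : P3) :
  'X_o0 ^+ 2 * mderiv o0 (mderiv o0 P) + 2 * 'X_o0 * 'X_o1 * mderiv o1 (mderiv o0 P)
  + 'X_o1 ^+ 2 * mderiv o1 (mderiv o1 P) = euler (euler P) - euler P.
Proof. by rewrite /euler !mderivD !mderivM !mderivXU /= (mderiv_comm o0 o1 P); ring. Qed.

End EulerOperator.

Arguments euler {R} P.

Section HomogenizedPolynomial.
Variable R : realFieldType.
Local Notation uv := [tuple ('X_o0 : {mpoly R[3]}); 'X_o1].

Lemma euler_comp_mpolyX (m : 'X_{1..2}) :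
  euler ('X_[m] \mPo uv) = (mdeg m)%:R *: ('X_[m] \mPo uv).
Proof.
have widen0 : widen_ord (leqnSn 1) ord_max = ord0 :> 'I_2 by apply/val_inj.
have -> : 'X_[m] \mPo uv = 'X_o0 ^+ m ord0 * 'X_o1 ^+ m ord_max.
  by rewrite comp_mpolyX !big_ord_recr big_ord0 /= mul1r widen0.
rewrite mdegE !big_ord_recr big_ord0 /= add0n widen0 natrD.
by apply: euler_eigenM; rewrite -[_%:R]mulr1; apply: euler_eigenXn;
  [exact: eulerX0 | exact: eulerX1].
Qed.

Lemma euler_hcomp (i : nat) (f : {mpoly R[2]}) :
  euler (hcomp i f \mPo uv) = i%:R *: (hcomp i f \mPo uv).
Proof.
rewrite /hcomp !raddf_sum euler_sum; apply: eq_bigr => m /eqP <-.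
by rewrite /= comp_mpolyZ eulerZ euler_comp_mpolyX !scalerA mulrC.
Qed.

Definition Fhom_term (n : nat) (f : {mpoly R[2]}) (i : nat) : {mpoly R[3]} :=
  'X_o2 ^+ (n - i) * (hcomp i f \mPo uv).

Lemma euler_Fhom_term n f i : euler (Fhom_term n f i) = i%:R *: Fhom_term n f i.
Proof.
rewrite -[i%:R]add0r; apply: euler_eigenM (euler_hcomp i f).
by rewrite -[0](mulr0 (n - i)%:R); apply: euler_eigenXn; exact: eulerX2.
Qed.

Lemma hessian_Fhom n f :
  euler (euler (Fhom n f)) - euler (Fhom n f)
  = \sum_(i < n.+1) (i * i.-1)%:R *: Fhom_term n f i.
Proof.
rewrite !euler_sum -sumrB; apply: eq_bigr => i _.
rewrite -/(Fhom_term n f i) euler_Fhom_term eulerZ euler_Fhom_term scalerA -scalerBl.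
by case: (nat_of_ord i) => [|k]; rewrite ?mul0r ?subrr // -natrM -natrB ?leq_pmulr // mulnSr addnK.
Qed.

Lemma ev3_comp_uv (P : {mpoly R[2]}) (u v : R) : ev3 (P \mPo uv) u v 0 = ev2 P u v.
Proof.
rewrite /ev3 /ev2 comp_mpoly_meval; apply: meval_eq => -[[|[|//]] ?];
  by rewrite /tnth /= mevalXU.
Qed.

Lemma ev3_Fhom_term_equator n f i (u v : R) : (i <= n)%N ->
  ev3 (Fhom_term n f i) u v 0 = if i == n then ev2 (hcomp n f) u v else 0.
Proof.
rewrite leq_eqVlt => /orP[/eqP-> | i_lt_n]; rewrite /Fhom_term /ev3 mevalM rmorphXn /= mevalXU /=.
  by rewrite subnn expr0 mul1r (eqxx n) -/(ev3 _ u v 0) ev3_comp_uv.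
by rewrite expr0n subn_eq0 (leqNgt n i) i_lt_n (ltn_eqF i_lt_n) mul0r.
Qed.

Lemma ev3_hessian_Fhom_equator n f (u v : R) :
  ev3 (euler (euler (Fhom n f)) - euler (Fhom n f)) u v 0
  = (n * n.-1)%:R * ev2 (hcomp n f) u v.
Proof.
rewrite hessian_Fhom /ev3 raddf_sum (bigD1 ord_max) //= big1 => [|i ne_max].
  by rewrite addr0 mevalZ -/(ev3 _ _ _ _) ev3_Fhom_term_equator // (eqxx n).
have i_lt_n : (i < n)%N by rewrite ltn_neqAle -ltnS ltn_ord andbT.
by rewrite mevalZ -/(ev3 _ _ _ _) ev3_Fhom_term_equator ?(ltnW i_lt_n) ?ltn_eqF ?mulr0.
Qed.

Lemma Qform_equator n f (u v a b c : R) :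
  Qform n f u v 0 a b c = (n * n.-1)%:R * ev2 (hcomp n f) u v * c ^+ 2.
Proof.
rewrite -ev3_hessian_Fhom_equator -hessian_euler /Qform /ev3.
by rewrite !mevalD !mevalM !mevalXU /= mevalMn meval1; ring.
Qed.

End HomogenizedPolynomial.

Theorem corollary1 (R : realFieldType) (n : nat) (f : {mpoly R[2]}) :
  (3 <= n)%N -> msize f = n.+1 ->
  forall u v w : R,
    (singular_point n f u v w /\ w = 0) <->
    (on_sphere u v w /\ w = 0 /\ ev2 (hcomp n f) u v = 0).
Proof.
move=> n_ge3 _ u v w.
have n_n1_neq0 : (n * n.-1)%:R != 0 :> R.
  by rewrite pnatr_eq0 muln_eq0; case: n n_ge3 => [|[|]].
split=> [[[sphere singular] w0] | [sphere [w0 fn0]]]; subst w.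
- split=> //; split=> //.
  have /eqP := singular 0 0 1 ltac:(ring).
  by rewrite Qform_equator expr1n mulr1 mulf_eq0 (negbTE n_n1_neq0) => /eqP.
- split=> //; split=> // a b c _.
  by rewrite Qform_equator fn0 mulr0 mul0r.
Qed.
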